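(* Let $\mathcal H$ be a family of graphs. The following are equivalent: (i) there is a constant $c=c(\mathcal H)$ such that every (not necessarily connected) $\mathcal H$-free graph $G$ has fewer than $c$ vertices of degree at least $2$; (ii) there is a positive integer $n$ such that $\mathcal H\le \{K_n,\ nP_3,\ nK_3,\ K_{1,n}^*,\ K_{2,n},\ K_2+nK_1,\ K_1+nK_2\}$.
   Context: All graphs are finite, simple, undirected. For graphs $H_1,H_2$, write $H_1\prec H_2$ if $H_2$ contains an induced subgraph isomorphic to $H_1$. A graph $G$ is $\mathcal H$-free if no $H\in\mathcal H$ satisfies $H\prec G$. For families $\mathcal H_1,\mathcal H_2$, write $\mathcal H_1\le\mathcal H_2$ if for every $H_2\in\mathcal H_2$ there is $H_1\in\mathcal H_1$ with $H_1\prec H_2$. $K_n$, $P_n$ are the complete graph and path on $n$ vertices; $K_{s,t}$ is the complete bipartite graph; $nG$ is the disjoint union of $n$ copies of $G$; $G_1+G_2$ is the join (disjoint union plus all edges between $V(G_1)$ and $V(G_2)$). $K_{1,n}^*$ is obtained from the star $K_{1,n}$ by attaching a new pendant vertex to each leaf. *)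

From mathcomp Require Import all_boot.
Set Implicit Arguments. Unset Strict Implicit. Unset Printing Implicit Defensive.

(* A finite simple graph, with vertex set 'I_n (every finite graph is
   isomorphic to one of these). *)
Record graph := Graph {
  gn : nat;
  gadj : rel 'I_gn;
  gsym : symmetric gadj;
  girr : irreflexive gadj }.
Arguments gadj : clear implicits.

Definition mkadj (n : nat) (r : nat -> nat -> bool) : rel 'I_n :=
  fun x y => (x != y) && (r x y || r y x).

Lemma mkadj_sym n r : symmetric (@mkadj n r).
Proof. by move=> x y; rewrite /mkadj eq_sym orbC. Qed.

Lemma mkadj_irr n r : irreflexive (@mkadj n r).
Proof. by move=> x; rewrite /mkadj eqxx. Qed.

Definition mkgraph (n : nat) (r : nat -> nat -> bool) : graph :=
  @Graph n (@mkadj n r) (@mkadj_sym n r) (@mkadj_irr n r).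

Definition induced_sub (H1 H2 : graph) : Prop :=
  exists f : 'I_(gn H1) -> 'I_(gn H2),
    injective f /\ forall x y, gadj H1 x y = gadj H2 (f x) (f y).

Definition graph_family := graph -> Prop.

Definition free (F : graph_family) (G : graph) : Prop :=
  forall H, F H -> ~ induced_sub H G.

Definition family_le (F1 F2 : graph_family) : Prop :=
  forall H2, F2 H2 -> exists2 H1, F1 H1 & induced_sub H1 H2.

Definition deg (G : graph) (v : 'I_(gn G)) : nat := #|[set u | gadj G v u]|.
Arguments deg : clear implicits.

Definition num_deg_ge2 (G : graph) : nat := #|[set v : 'I_(gn G) | 1 < deg G v]|.

Definition Kn (n : nat) : graph := mkgraph n (fun _ _ => true).
(* n P_3 : block i/3, path 0-1-2 inside each block *)
Definition nP3 (n : nat) : graph :=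
  mkgraph (3 * n) (fun i j => (i %/ 3 == j %/ 3) && ((i %% 3).+1 == j %% 3)).
Definition nK3 (n : nat) : graph :=
  mkgraph (3 * n) (fun i j => i %/ 3 == j %/ 3).
(* K_{1,n}^* : centre 0, leaves 1..n, pendant vertex i+n attached to leaf i *)
Definition K1nstar (n : nat) : graph :=
  mkgraph (2 * n).+1
    (fun i j => ((i == 0) && (1 <= j <= n)) || ((1 <= i <= n) && (j == i + n))).
(* K_{2,n} : parts {0,1} and {2,...,n+1} *)
Definition K2n (n : nat) : graph :=
  mkgraph n.+2 (fun i j => (i < 2) && (2 <= j)).
(* K_2 + nK_1 : 0,1 adjacent to each other and to everything *)
Definition K2_join_nK1 (n : nat) : graph :=
  mkgraph n.+2 (fun i _ => i < 2).
(* K_1 + nK_2 : 0 adjacent to everything, edges {2k+1, 2k+2} *)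
Definition K1_join_nK2 (n : nat) : graph :=
  mkgraph (2 * n).+1 (fun i j => (i == 0) || (odd i && (j == i.+1))).

Definition target_family (n : nat) : graph_family :=
  fun G => G = Kn n \/ G = nP3 n \/ G = nK3 n \/ G = K1nstar n \/
           G = K2n n \/ G = K2_join_nK1 n \/ G = K1_join_nK2 n.

From mathcomp Require Import all_boot zify.
From Stdlib Require Import Classical.
Set Implicit Arguments. Unset Strict Implicit. Unset Printing Implicit Defensive.

(* Each of the seven graphs of size parameter n has at least n vertices of
   degree at least 2, which gives (i) -> (ii) with n = c + 3.  Conversely, a
   vertex v of degree at least 2 together with two chosen neighbours forms a
   cherry; colour each pair of cherries by the pattern of equalities and
   adjacencies between their three roles.  Ramsey's theorem yields n + 3
   cherries with a common pattern.  Roles either coincide in all these cherries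
   (shared) or are pairwise distinct (private); if two private roles are
   adjacent across cherries we find K_n or K_{2,n}, and otherwise the number of
   shared neighbour roles (0, 1 or 2) and the edge between the two neighbours
   single out nK_3 / nP_3, K_1 + nK_2 / K_{1,n}^*, or K_2 + nK_1 / K_{2,n}. *)

Lemma sum_count_fibres (X : Type) (T : finType) (f : X -> T) (s : seq X) :
  \sum_(c : T) count (fun y => f y == c) s = size s.
Proof.
elim: s => [|x s IH] /=; first by rewrite big1.
rewrite big_split /= IH (bigD1 (f x)) //= eqxx big1 ?add1n // => c /negbTE.
by rewrite eq_sym => ->.
Qed.

Lemma pigeonhole_count (X : Type) (T : finType) (f : X -> T) (s : seq X) (m : nat) :
  #|T| * m < size s -> exists c, m <= count (fun y => f y == c) s.
Proof.
move=> lt_s; have [/existsP[c le_c]|/existsPn small] :=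
  boolP [exists c, m <= count (fun y => f y == c) s]; first by exists c.
suff: size s <= #|T| * m by rewrite leqNgt lt_s.
rewrite -(sum_count_fibres f) -sum_nat_const; apply: leq_sum => c _.
by move/(_ c): small; rewrite -ltnNge => /ltnW.
Qed.

Lemma colour_chain (T : finType) (L : nat) :
  exists N, forall (X : eqType) (col : X -> X -> T) (s : seq X), N <= size s ->
    exists t : seq (X * T),
      [/\ subseq (map fst t) s, pairwise (fun p q => col p.1 q.1 == p.2) t & size t = L].
Proof.
elim: L => [|L [N IH]].
  by exists 0 => X col s _; exists [::]; rewrite sub0seq.
exists (#|T| * N).+2 => X col [|x s] //= le_s.
have [c le_c] := pigeonhole_count (col x) le_s.
have le_sc : N <= size [seq y <- s | col x y == c] by rewrite size_filter.
have [t [sub_t chain_t size_t]] := IH X col _ le_sc.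
exists ((x, c) :: t); split => /=; last by rewrite size_t.
- by rewrite eqxx; apply: subseq_trans sub_t (filter_subseq _ _).
- rewrite chain_t andbT; apply/allP => q /(map_f fst)/(mem_subseq sub_t).
  by rewrite mem_filter => /andP[].
Qed.

Lemma ramsey (T : finType) (m : nat) :
  exists N, forall (X : eqType) (col : X -> X -> T) (s : seq X), N <= size s ->
    exists u c, [/\ subseq u s, m <= size u & pairwise (fun x y => col x y == c) u].
Proof.
have [N chainN] := colour_chain T (#|T| * m).+1.
exists N => X col s le_s.
have [t [sub_t chain_t size_t]] := chainN X col s le_s.
have [c le_c] : exists c, m <= count (fun p => p.2 == c) t.
  by apply: pigeonhole_count; rewrite size_t.
exists (map fst [seq p <- t | p.2 == c]), c; split.
- by apply: subseq_trans sub_t; apply/map_subseq/filter_subseq.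
- by rewrite size_map size_filter.
- rewrite pairwise_map.
  apply: (@sub_in_pairwise _ [pred p | p.2 == c] _ _ _ _ _ (pairwise_filter _ chain_t)).
  + by move=> p q /eqP <- _.
  + by apply/allP => p; rewrite mem_filter => /andP[].
Qed.

Lemma induced_sub_trans (A B C : graph) :
  induced_sub A B -> induced_sub B C -> induced_sub A C.
Proof.
move=> [f [f_inj f_adj]] [g [g_inj g_adj]]; exists (g \o f).
by split=> [|x y /=]; [exact: inj_comp | rewrite f_adj g_adj].
Qed.

Lemma induced_sub_mkgraph (N : nat) (r : nat -> nat -> bool) (G : graph)
    (f : nat -> 'I_(gn G)) :
  (forall x y, x < y < N -> f x != f y /\ (r x y || r y x) = gadj G (f x) (f y)) ->
  induced_sub (mkgraph N r) G.
Proof.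
move=> f_ok.
have f_pair (x y : 'I_N) : x != y -> f x != f y /\ mkadj r x y = gadj G (f x) (f y).
  wlog lt_xy : x y / x < y => [wlog_lt ne_xy|ne_xy].
    case: (ltngtP x y) => [lt_xy|lt_yx|/val_inj eq_xy]; first exact: wlog_lt.
    - have [|ne_f adj_f] := wlog_lt y x lt_yx; first by rewrite eq_sym.
      by rewrite eq_sym ne_f mkadj_sym gsym.
    - by rewrite eq_xy eqxx in ne_xy.
  have [|ne_f adj_f] := f_ok x y; first by rewrite lt_xy ltn_ord.
  by rewrite /mkadj ne_xy adj_f.
exists (fun x => f x); split=> [x y|x y /=].
- by apply: contra_eq => /f_pair[].
- by case: (eqVneq x y) => [<-|/f_pair[] _ //]; rewrite mkadj_irr girr.
Qed.

Lemma deg_gt1 (G : graph) (v u1 u2 : 'I_(gn G)) :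
  gadj G v u1 -> gadj G v u2 -> u1 != u2 -> 1 < deg G v.
Proof.
move=> vu1 vu2 ne_u; have <- : #|[set u1; u2]| = 2 by rewrite cards2 ne_u.
by apply/subset_leq_card/subsetP => x; rewrite !inE => /orP[]/eqP->.
Qed.

Definition nat_mkadj (r : nat -> nat -> bool) (x y : nat) := (x != y) && (r x y || r y x).

Lemma num_deg_ge2_mkgraph (N : nat) (r : nat -> nat -> bool) (n : nat) (g : nat -> nat) :
  (forall i, i < n -> g i < N) -> (forall i j, i < j < n -> g i != g j) ->
  (forall i, i < n -> exists u1 u2,
     [/\ u1 < N, u2 < N, u1 != u2, nat_mkadj r (g i) u1 & nat_mkadj r (g i) u2]) ->
  n <= num_deg_ge2 (mkgraph N r).
Proof.
case: n => // n; case: N => [|N] g_lt g_inj g_deg2; first by have := g_lt 0 isT.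
pose h (i : 'I_n.+1) : 'I_N.+1 := inord (g i).
have h_inj : injective h.
  move=> i j /(congr1 val); rewrite /= !inordK ?g_lt // => eq_g; apply: val_inj.
  case: (ltngtP i j) => [lt_ij|lt_ji|//]; [move: (g_inj i j) | move: (g_inj j i)];
    by rewrite ?lt_ij ?lt_ji ltn_ord eq_g eqxx => /(_ isT).
have <- : #|[set h i | i : 'I_n.+1]| = n.+1 by rewrite card_imset // card_ord.
apply/subset_leq_card/subsetP => _ /imsetP[i _ ->]; rewrite inE.
have [u1 [u2 [lt_u1 lt_u2 ne_u adj_u1 adj_u2]]] := g_deg2 i (ltn_ord i).
apply: (@deg_gt1 (mkgraph N.+1 r) _ (inord u1) (inord u2));
  by rewrite /= /mkadj -?(inj_eq val_inj) /= !inordK ?g_lt.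
Qed.

Lemma target_num_deg_ge2 (n : nat) (T : graph) :
  3 <= n -> target_family n T -> n <= num_deg_ge2 T.
Proof.
move=> n_ge3 [->|[->|[->|[->|[->|[->|->]]]]]].
- apply: (@num_deg_ge2_mkgraph _ _ _ id) => [i|i j|i] /= lt_i; try lia.
  exists (if i == 0 then 1 else 0), (if i == 2 then 1 else 2).
  by rewrite /nat_mkadj; case: eqP => ?; case: eqP => ?; split; lia.
- apply: (@num_deg_ge2_mkgraph _ _ _ (fun i => 3 * i + 1)) => [i|i j|i] /= lt_i; try lia.
  by exists (3 * i), (3 * i + 2); rewrite /nat_mkadj; split; lia.
- apply: (@num_deg_ge2_mkgraph _ _ _ (fun i => 3 * i)) => [i|i j|i] /= lt_i; try lia.
  by exists (3 * i + 1), (3 * i + 2); rewrite /nat_mkadj; split; lia.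
- apply: (@num_deg_ge2_mkgraph _ _ _ S) => [i|i j|i] /= lt_i; try lia.
  by exists 0, (i.+1 + n); rewrite /nat_mkadj; split; lia.
- apply: (@num_deg_ge2_mkgraph _ _ _ (addn 2)) => [i|i j|i] /= lt_i; try lia.
  by exists 0, 1; rewrite /nat_mkadj; split; lia.
- apply: (@num_deg_ge2_mkgraph _ _ _ (addn 2)) => [i|i j|i] /= lt_i; try lia.
  by exists 0, 1; rewrite /nat_mkadj; split; lia.
- apply: (@num_deg_ge2_mkgraph _ _ _ (fun i => (2 * i).+1)) => [i|i j|i] /= lt_i; try lia.
  by exists 0, (2 * i).+2; rewrite /nat_mkadj; split; lia.
Qed.

Section Cherry.

Variable G : graph.
Implicit Types v : 'I_(gn G).

Definition nbr1 v := odflt v [pick u | gadj G v u].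
Definition nbr2 v := odflt v [pick u | gadj G v u && (u != nbr1 v)].

(* Roles of the cherry [nbr1 v - v - nbr2 v]; every [k >= 2] is read as role 2. *)
Definition role (k : nat) v := if k is 0 then v else if k is 1 then nbr1 v else nbr2 v.

Lemma nbr_spec v :
  1 < deg G v -> [/\ gadj G v (nbr1 v), gadj G v (nbr2 v) & nbr1 v != nbr2 v].
Proof.
rewrite /deg => deg_v.
have adj1 : gadj G v (nbr1 v).
  rewrite /nbr1; case: pickP => [//|no_nbr].
  by move: deg_v; rewrite (_ : [set u | _] = set0) ?cards0 //;
    apply/setP => u; rewrite !inE no_nbr.
suff /andP[adj2 ne21] : gadj G v (nbr2 v) && (nbr2 v != nbr1 v).
  by rewrite eq_sym.
rewrite /nbr2; case: pickP => [//|no_nbr]; exfalso; move: deg_v; apply/negP.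
rewrite -leqNgt -(cards1 (nbr1 v)); apply/subset_leq_card/subsetP.
by move=> u; rewrite !inE => adj_u; move: (no_nbr u); rewrite /= adj_u => /negbFE.
Qed.

Lemma role_neq v k l :
  1 < deg G v -> k < 3 -> l < 3 -> k != l -> role k v != role l v.
Proof.
move=> /nbr_spec[adj1 adj2 ne12].
have ne01 : v != nbr1 v by apply: contraTneq adj1 => <-; rewrite girr.
have ne02 : v != nbr2 v by apply: contraTneq adj2 => <-; rewrite girr.
by case: k l => [|[|[|k]]] [|[|[|l]]] //= *; rewrite // eq_sym.
Qed.

Lemma role_adj v k l : 1 < deg G v -> k < 3 -> l < 3 -> k != l ->
  gadj G (role k v) (role l v) = (k + l != 3) || gadj G (role 1 v) (role 2 v).
Proof.
move=> /nbr_spec[adj1 adj2 _].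
by case: k l => [|[|[|k]]] [|[|[|l]]] //= *; rewrite // gsym ?orbT.
Qed.

End Cherry.

(* The inner edge [nbr1 - nbr2] of a cherry enters the colour of a pair only
   through its first member, hence the bound [n + 2] in [hom_inner]. *)
Record homogeneous (G : graph) (n : nat) (w : nat -> 'I_(gn G)) : Prop := Homogeneous {
  hom_deg : forall i, i < n + 3 -> 1 < deg G (w i);
  hom_neq : forall i j, i < j < n + 3 -> w i != w j;
  hom_eq : forall i j k l, i < j < n + 3 ->
    (role k (w i) == role l (w j)) = (role k (w 0) == role l (w 1));
  hom_adj : forall i j k l, i < j < n + 3 ->
    gadj G (role k (w i)) (role l (w j)) = gadj G (role k (w 0)) (role l (w 1));
  hom_inner : forall i, i < n + 2 ->
    gadj G (role 1 (w i)) (role 2 (w i)) = gadj G (role 1 (w 0)) (role 2 (w 0)) }.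
Arguments homogeneous : clear implicits.

Definition contains_target (G : graph) (n : nat) :=
  exists2 T, target_family n T & induced_sub T G.

Section Homogeneous.

Variables (G : graph) (n : nat) (w : nat -> 'I_(gn G)).
Hypothesis hom : homogeneous G n w.

Definition shared k := role k (w 0) == role k (w 1).
Definition cross_adj k l := gadj G (role k (w 0)) (role l (w 1)).
Definition inner_edge := gadj G (role 1 (w 0)) (role 2 (w 0)).

Lemma centre_unshared : ~~ shared 0.
Proof. by rewrite /shared /role; apply: (hom_neq hom); lia. Qed.

Lemma shared_role_eq k i j : shared k -> i < n + 3 -> j < n + 3 ->
  role k (w i) = role k (w j).
Proof.
have to0 m : shared k -> m < n + 3 -> role k (w m) = role k (w 0).
  case: m => [//|m] sh_k lt_m; apply/esym/eqP.
  by rewrite (hom_eq hom (i := 0)) //= ltn0Sn.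
by move=> sh_k lt_i lt_j; rewrite to0 // (to0 j).
Qed.

Lemma hom_role_neq i j k l : i < j < n + 3 -> k < 3 -> l < 3 ->
  (k != l) || ~~ shared k -> role k (w i) != role l (w j).
Proof.
move=> lt_ij lt_k lt_l; rewrite (hom_eq hom _ _ lt_ij).
case: (eqVneq k l) => [<- //|ne_kl _]; apply/eqP => eq01.
have [eq02 eq12] : role k (w 0) = role l (w 2) /\ role k (w 1) = role l (w 2).
  by split; apply/eqP; rewrite (hom_eq hom) ?eq01 ?eqxx //; lia.
have deg1 : 1 < deg G (w 1) by apply: (hom_deg hom); lia.
have := role_neq deg1 lt_k lt_l ne_kl.
by rewrite eq12 -eq02 eq01 eqxx.
Qed.

Lemma hom_inner_neq i k l : i < n + 3 -> k < 3 -> l < 3 -> k != l ->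
  role k (w i) != role l (w i).
Proof. by move=> /(hom_deg hom); apply: role_neq. Qed.

Lemma hom_inner_adj i k l : i < n + 2 -> k < 3 -> l < 3 -> k != l ->
  gadj G (role k (w i)) (role l (w i)) = (k + l != 3) || inner_edge.
Proof.
move=> lt_i lt_k lt_l ne_kl.
by rewrite role_adj ?(hom_inner hom lt_i) ?(hom_deg hom) //; lia.
Qed.

Lemma induced_sub_cross (N : nat) (r : nat -> nat -> bool) (rho : nat -> nat) :
  N <= n + 3 -> (forall x, x < N -> rho x < 3 /\ ~~ shared (rho x)) ->
  (forall x y, x < y < N -> (r x y || r y x) = cross_adj (rho x) (rho y)) ->
  induced_sub (mkgraph N r) G.
Proof.
move=> le_N rho_ok r_cross.
apply: (induced_sub_mkgraph (f := fun x => role (rho x) (w x))) => x y lt_xy.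
have [[lt_rx unsh_x] [lt_ry _]] :
    (rho x < 3 /\ ~~ shared (rho x)) /\ (rho y < 3 /\ ~~ shared (rho y)).
  by split; apply: rho_ok; lia.
split; first by apply: hom_role_neq; rewrite ?unsh_x ?orbT //; lia.
by rewrite r_cross // /cross_adj (hom_adj hom) //; lia.
Qed.

Lemma target_clique k : k < 3 -> ~~ shared k -> cross_adj k k -> contains_target G n.
Proof.
move=> lt_k unsh_k adj_kk; exists (Kn n); first by left.
by apply: (induced_sub_cross (rho := fun=> k)) => [|x|x y] /=; rewrite ?adj_kk //; lia.
Qed.

Lemma target_biclique k l : k < 3 -> l < 3 -> ~~ shared k -> ~~ shared l ->
  ~~ cross_adj k k -> ~~ cross_adj l l -> cross_adj k l -> contains_target G n.
Proof.
move=> lt_k lt_l unsh_k unsh_l /negbTE nadj_kk /negbTE nadj_ll adj_kl.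
exists (K2n n); first by do 4 right; left.
apply: (induced_sub_cross (rho := fun x => if x < 2 then k else l)) => [|x|x y] /=.
- lia.
- by case: ifP.
- by case: (ltnP x 2) => lt_x; case: (ltnP y 2) => lt_y //=; lia.
Qed.

Section PrivateIndependent.

Hypothesis private_indep : forall k l, k < 3 -> l < 3 ->
  ~~ shared k -> ~~ shared l -> ~~ cross_adj k l.

Lemma private_apart i j k l : i != j -> i < n + 3 -> j < n + 3 -> k < 3 -> l < 3 ->
  ~~ shared k -> ~~ shared l ->
  role k (w i) != role l (w j) /\ ~~ gadj G (role k (w i)) (role l (w j)).
Proof.
wlog lt_ij : i j k l / i < j => [wlog_lt ne_ij|_] lt_i lt_j lt_k lt_l unsh_k unsh_l.
  case: (ltngtP i j) => [lt_ij|lt_ji|eq_ij]; first exact: wlog_lt.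
  - by rewrite eq_sym gsym; apply: wlog_lt; rewrite // eq_sym.
  - by rewrite eq_ij eqxx in ne_ij.
split; first by apply: hom_role_neq; rewrite ?unsh_k ?orbT //; lia.
by rewrite (hom_adj hom) ?private_indep //; lia.
Qed.

(* [sh] restates [shared] as an explicit predicate on roles, so that the
   side conditions of each application are arithmetic. *)
Lemma induced_sub_cherries (N : nat) (r : nat -> nat -> bool) (rho iota : nat -> nat)
    (sh : pred nat) :
  (forall k, k < 3 -> shared k = sh k) ->
  (forall x, x < N -> rho x < 3 /\ iota x < n + 2) ->
  (forall x y, x < y < N -> [&& iota x != iota y, ~~ sh (rho x) & ~~ sh (rho y)] ->
     (r x y || r y x) = false) ->
  (forall x y, x < y < N -> [|| iota x == iota y, sh (rho x) | sh (rho y)] ->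
     rho x != rho y /\ (r x y || r y x) = (rho x + rho y != 3) || inner_edge) ->
  induced_sub (mkgraph N r) G.
Proof.
move=> sh_E rho_ok cross_pair inner_pair.
apply: (induced_sub_mkgraph (f := fun x => role (rho x) (w (iota x)))) => x y lt_xy.
have [[lt_rx lt_ix] [lt_ry lt_iy]] :
    (rho x < 3 /\ iota x < n + 2) /\ (rho y < 3 /\ iota y < n + 2).
  by split; apply: rho_ok; lia.
have [inner|] := boolP [|| iota x == iota y, sh (rho x) | sh (rho y)].
  have [ne_r ->] := inner_pair x y lt_xy inner.
  have [c lt_c [-> ->]] : exists2 c, c < n + 2 &
      role (rho x) (w (iota x)) = role (rho x) (w c) /\
      role (rho y) (w (iota y)) = role (rho y) (w c).
    case/or3P: inner => [/eqP <-|sh_x|sh_y]; first by exists (iota x).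
    - by exists (iota y);
        rewrite // (shared_role_eq (i := iota x) (j := iota y)) ?sh_E //; lia.
    - by exists (iota x);
        rewrite // (shared_role_eq (i := iota y) (j := iota x)) ?sh_E //; lia.
  split; first by apply: hom_inner_neq; lia.
  by rewrite hom_inner_adj.
rewrite !negb_or -(sh_E _ lt_rx) -(sh_E _ lt_ry) => /and3P[ne_i unsh_x unsh_y].
have [||ne_f /negbTE ->] := private_apart ne_i _ _ lt_rx lt_ry unsh_x unsh_y; try lia.
split=> //; apply: cross_pair => //.
by rewrite ne_i -(sh_E _ lt_rx) -(sh_E _ lt_ry) unsh_x unsh_y.
Qed.

Lemma target_unshared : ~~ shared 1 -> ~~ shared 2 -> contains_target G n.
Proof.
move=> unsh1 unsh2.
have sh_E k : k < 3 -> shared k = false.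
  by case: k => [|[|[|]]] // _; apply/negbTE; first exact: centre_unshared.
case e: inner_edge.
- exists (nK3 n); first by do 2 right; left.
  apply: (induced_sub_cherries (rho := fun x => x %% 3) (iota := fun x => x %/ 3)
    (sh := fun=> false) sh_E) => [x|x y|x y] /=; rewrite ?e; lia.
- exists (nP3 n); first by right; left.
  apply: (induced_sub_cherries (rho := fun x => (2 * x + 1) %% 3) (iota := fun x => x %/ 3)
    (sh := fun=> false) sh_E) => [x|x y|x y] /=; rewrite ?e; lia.
Qed.

Lemma target_one_shared p : 0 < p < 3 -> shared p -> ~~ shared (3 - p) ->
  contains_target G n.
Proof.
move=> lt_p sh_p unsh_q.
have sh_E k : k < 3 -> shared k = (k == p).
  move=> lt_k; have [->|[->|->]] : k = 0 \/ k = p \/ k = 3 - p by lia.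
  - by rewrite (negbTE centre_unshared); lia.
  - by rewrite sh_p eqxx.
  - by rewrite (negbTE unsh_q); lia.
case e: inner_edge.
- exists (K1_join_nK2 n); first by do 6 right.
  apply: (induced_sub_cherries
    (rho := fun x => if x == 0 then p else if odd x then 0 else 3 - p)
    (iota := fun x => (x - 1) %/ 2) sh_E) => [x|x y|x y] /=;
    rewrite ?e; repeat case: ifP => ?; lia.
- exists (K1nstar n); first by do 3 right; left.
  apply: (induced_sub_cherries
    (rho := fun x => if x == 0 then p else if x <= n then 0 else 3 - p)
    (iota := fun x => if x <= n then x - 1 else x - 1 - n) sh_E) => [x|x y|x y] /=;
    rewrite ?e; repeat case: ifP => ?; lia.
Qed.

Lemma target_two_shared : shared 1 -> shared 2 -> contains_target G n.
Proof.
move=> sh1 sh2.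
have sh_E k : k < 3 -> shared k = (k != 0).
  by case: k => [|[|[|]]] // _; rewrite (negbTE centre_unshared).
case e: inner_edge.
- exists (K2_join_nK1 n); first by do 5 right; left.
  apply: (induced_sub_cherries (rho := fun x => if x < 2 then x.+1 else 0)
    (iota := fun x => x - 2) sh_E) => [x|x y|x y] /=;
    rewrite ?e; repeat case: ifP => ?; lia.
- exists (K2n n); first by do 4 right; left.
  apply: (induced_sub_cherries (rho := fun x => if x < 2 then x.+1 else 0)
    (iota := fun x => x - 2) sh_E) => [x|x y|x y] /=;
    rewrite ?e; repeat case: ifP => ?; lia.
Qed.

End PrivateIndependent.

Lemma homogeneous_contains_target : contains_target G n.
Proof.
have [/existsP[k /existsP[l /and3P[unsh_k unsh_l adj_kl]]]|no_adj] := boolP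
  [exists k : 'I_3, exists l : 'I_3, [&& ~~ shared k, ~~ shared l & cross_adj k l]].
  have [adj_kk|nadj_kk] := boolP (cross_adj k k).
    exact: (target_clique (ltn_ord k) unsh_k adj_kk).
  have [adj_ll|nadj_ll] := boolP (cross_adj l l).
    exact: (target_clique (ltn_ord l) unsh_l adj_ll).
  exact: (target_biclique (ltn_ord k) (ltn_ord l) unsh_k unsh_l nadj_kk nadj_ll adj_kl).
have private_indep k l : k < 3 -> l < 3 ->
    ~~ shared k -> ~~ shared l -> ~~ cross_adj k l.
  move=> lt_k lt_l unsh_k unsh_l; apply: contraNN no_adj => adj_kl.
  apply/existsP; exists (Ordinal lt_k); apply/existsP; exists (Ordinal lt_l).
  by rewrite /= unsh_k unsh_l.
have [sh1|unsh1] := boolP (shared 1); have [sh2|unsh2] := boolP (shared 2).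
- exact: target_two_shared.
- exact: (target_one_shared private_indep (p := 1)).
- exact: (target_one_shared private_indep (p := 2)).
- exact: target_unshared.
Qed.

End Homogeneous.

Definition cherry_pattern : finType := ({ffun 'I_3 * 'I_3 -> bool * bool} * bool)%type.

Definition cherry_colour (G : graph) (u v : 'I_(gn G)) : cherry_pattern :=
  ([ffun kl : 'I_3 * 'I_3 =>
      (role kl.1 u == role kl.2 v, gadj G (role kl.1 u) (role kl.2 v))],
   gadj G (role 1 u) (role 2 u)).

Lemma role_inord (G : graph) k (v : 'I_(gn G)) : role (@inord 2 (minn k 2)) v = role k v.
Proof. by rewrite inordK; [case: k => [|[|k]] | lia]. Qed.

Lemma cherry_colourP (G : graph) (u v u' v' : 'I_(gn G)) :
  cherry_colour u v = cherry_colour u' v' ->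
  [/\ forall k l, (role k u == role l v) = (role k u' == role l v'),
      forall k l, gadj G (role k u) (role l v) = gadj G (role k u') (role l v')
    & gadj G (role 1 u) (role 2 u) = gadj G (role 1 u') (role 2 u')].
Proof.
move=> eq_c; split=> [k l|k l|]; last exact: (congr1 snd eq_c).
all: have := congr1 (fun c : cherry_pattern => c.1 (inord (minn k 2), inord (minn l 2))) eq_c.
all: by rewrite /= !ffunE /= !role_inord => -[].
Qed.

Lemma contains_target_of_many_deg_ge2 (n : nat) :
  exists N, forall G : graph, N <= num_deg_ge2 G -> contains_target G n.
Proof.
have [N ramseyN] := ramsey cherry_pattern (n + 3).
exists N => G; rewrite /num_deg_ge2 cardE => /(ramseyN _ (@cherry_colour G)).
case=> -[|x0 u] [c [sub_u size_u mono_u]]; rewrite /= in size_u; first lia.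
pose w i := nth x0 (x0 :: u) i.
have hom_pair i j : i < j < n + 3 -> cherry_colour (w i) (w j) = cherry_colour (w 0) (w 1).
  have colour_w i' j' : i' < j' < n + 3 -> cherry_colour (w i') (w j') = c.
    move=> lt_ij; apply/eqP; apply: (elimT (pairwiseP x0) mono_u); rewrite ?inE /=; lia.
  by move=> lt_ij; rewrite !colour_w //; lia.
apply: (homogeneous_contains_target (w := w)); split.
- move=> i lt_i; suff: w i \in enum [set v | 1 < deg G v] by rewrite mem_enum inE.
  by apply/(mem_subseq sub_u)/mem_nth => /=; lia.
- move=> i j lt_ij; rewrite /w nth_uniq ?(subseq_uniq sub_u (enum_uniq _)) /=; lia.
- by move=> i j k l /hom_pair/cherry_colourP[].
- by move=> i j k l /hom_pair/cherry_colourP[].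
- move=> i lt_i; have lt_ii : i < i.+1 < n + 3 by lia.
  by case/cherry_colourP: (hom_pair i i.+1 lt_ii).
Qed.

Theorem corollary1p8 (H : graph_family) :
  (exists c : nat, forall G : graph, free H G -> num_deg_ge2 G < c) <->
  (exists n : nat, 0 < n /\ family_le H (target_family n)).
Proof.
split=> [[c free_small]|[n [_ le_H]]].
- exists (c + 3); split=> [|T target_T]; first by rewrite addn3.
  apply: NNPP => no_sub.
  have free_T : free H T by move=> H1 H1_H sub_H1T; apply: no_sub; exists H1.
  have := target_num_deg_ge2 (leq_addl c 3) target_T.
  by have := free_small T free_T; lia.
- have [N many_target] := contains_target_of_many_deg_ge2 n.
  exists N => G free_G; rewrite ltnNge; apply/negP => /many_target[T target_T sub_TG].
  have [H1 H1_H sub_H1T] := le_H T target_T.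
  exact: free_G H1 H1_H (induced_sub_trans sub_H1T sub_TG).
Qed.
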